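(* Let $Z=(Z^i)_{i\in\mathbf{I}}$ be a time homogeneous counting process with generic intensities $\phi^i$, and for each $i$ let $\mathbf{V}^i=\{v^i_k,k\in\mathbb{N}\}$ be a coherent family of neighborhoods which is increasing ($v^i_k\subset v^i_{k+1}$ for all $k$). Let $\mathcal{Y}\subset\mathcal{X}$ be such that $$\sup_{i\in\mathbf{I}}\ \sup_{x,y\in\mathcal{Y}:\,x\overset{v^i_k}{=}y}|\phi^i(x)-\phi^i(y)|\to 0\quad (k\to\infty).$$ Define $\Delta^i_{v^i_0}(x)=\inf\{\phi^i(y):y\in\mathcal{Y},\,y\overset{v^i_0}{=}x\}$ and, for $k>0$, $\Delta^i_{v^i_k}(x)=\inf\{\phi^i(y):y\in\mathcal{Y},\,y\overset{v^i_k}{=}x\}-\inf\{\phi^i(y):y\in\mathcal{Y},\,y\overset{v^i_{k-1}}{=}x\}$. Then for any probabilities $\lambda^i$ on $\mathbf{V}^i$ such that $\lambda^i(v)=0$ only if $\sup_{x\in\mathcal{X}\cap\mathcal{Y}}\Delta^i_v(x)=0$, the process $(Z^i)$ admits the Kalikow decomposition with respect to $(\mathbf{V}^i)_{i\in\mathbf{I}}$ and $\mathcal{Y}$, with weights $\lambda^i(v)$ and cylindrical functions $\phi^i_v=\Delta^i_v/\lambda^i(v)$ (convention $0/0=0$).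
   Context: $\mathbf{I}$ is countable; $\mathcal{X}$ is the set of configurations $x=(\{t^i_n\}_n)_{i\in\mathbf{I}}$ of locally finite point sets in $(-\infty,0)$. A neighborhood is a Borel subset $v\subset\mathbf{I}\times(-\infty,0)$, finite if contained in $J\times[a,b]$ with $J$ finite; $x\overset{v}{=}y$ means $x,y$ have the same points in $v$; $f$ is cylindrical on $v$ if $f(x)=f(y)$ whenever $x\overset{v}{=}y$. A time homogeneous counting process with generic intensity $\phi^i:\mathcal{X}\to\mathbb{R}_+$ has stochastic intensity at time $t$ equal to $\phi^i$ of the past configuration before $t$ shifted so that $t$ becomes $0$. If $\mathcal{V}^i$ is the minimal subset of $\mathbf{I}\times(-\infty,0)$ on which $\phi^i$ is cylindrical, a countable family $\mathbf{V}^i$ of finite neighborhoods is coherent if $\mathcal{V}^i\subset\bigcup_{v\in\mathbf{V}^i}v$. Kalikow decomposition w.r.t. $(\mathbf{V}^i)$ and $\mathcal{Y}$: for each $i$ a probability $\lambda^i$ on $\mathbf{V}^i$ and functions $\phi^i_v\ge0$ cylindrical on $v$ with $\phi^i(x)=\sum_{v}\lambda^i(v)\phi^i_v(x)$ for all $x\in\mathcal{X}\cap\mathcal{Y}$. *)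

From HB Require Import structures.
From mathcomp Require Import all_boot all_order all_algebra.
From mathcomp Require Import all_classical all_reals all_analysis.
Set Implicit Arguments. Unset Strict Implicit. Unset Printing Implicit Defensive.
Import Order.TTheory GRing.Theory Num.Theory numFieldNormedType.Exports.
Local Open Scope classical_set_scope.
Local Open Scope ring_scope.

Section Defs.
Variables (R : realType) (I : countType).

(* raw configurations: for each i, a set of times *)
Definition cfg := I -> set R.

Definition Xcfg : set cfg :=
  [set x | forall i, x i `<=` [set t | t < 0] /\
           forall a b : R, finite_set (x i `&` [set t | a <= t <= b])].

Definition eqon (v : set (I * R)) (x y : cfg) : Prop :=
  forall i t, v (i, t) -> (x i t <-> y i t).

Definition cylindrical (f : cfg -> R) (v : set (I * R)) : Prop :=
  forall x y, Xcfg x -> Xcfg y -> eqon v x y -> f x = f y.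

(* neighborhood: Borel subset of I x (-oo,0) (I discrete countable) *)
Definition neighborhood (v : set (I * R)) : Prop :=
  v `<=` [set p | p.2 < 0] /\ forall i, measurable [set t : R | v (i, t)].

Definition finite_nbhd (v : set (I * R)) : Prop :=
  neighborhood v /\
  exists (J : set I) (a b : R), finite_set J /\
    v `<=` [set p | J p.1 /\ a <= p.2 <= b].

Definition minimal_cyl_set (f : cfg -> R) (W : set (I * R)) : Prop :=
  W `<=` [set p | p.2 < 0] /\ cylindrical f W /\
  forall W', W' `<=` [set p | p.2 < 0] -> cylindrical f W' -> W `<=` W'.

Definition coherent (f : cfg -> R) (V : nat -> set (I * R)) : Prop :=
  forall W, minimal_cyl_set f W -> W `<=` \bigcup_k V k.

(* inf { phi(y) : y in Y, y =v= x } in the extended reals (inf of empty = +oo) *)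
Definition infY (Y : set cfg) (f : cfg -> R) (v : set (I * R)) (x : cfg)
  : \bar R :=
  ereal_inf [set (f y)%:E | y in [set y | Y y /\ eqon v y x]].

Definition Delta (Y : set cfg) (f : cfg -> R) (V : nat -> set (I * R))
  (k : nat) (x : cfg) : \bar R :=
  match k with
  | 0 => infY Y f (V 0) x
  | k'.+1 => (infY Y f (V k'.+1) x - infY Y f (V k') x)%E
  end.

Definition oscillation (Y : set cfg) (phi : I -> cfg -> R)
  (V : I -> nat -> set (I * R)) (k : nat) : \bar R :=
  ereal_sup [set ereal_sup [set (`|phi i xy.1 - phi i xy.2|)%:E
                           | xy in [set xy : cfg * cfg |
                                    Y xy.1 /\ Y xy.2 /\ eqon (V i k) xy.1 xy.2]]
            | i in [set: I]].

Definition is_prob (lam : nat -> R) : Prop :=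
  (forall k, 0 <= lam k) /\ (\sum_(0 <= k <oo) (lam k)%:E = 1)%E.

Definition Kalikow_decomposition (Y : set cfg) (phi : I -> cfg -> R)
  (V : I -> nat -> set (I * R)) (lam : I -> nat -> R)
  (phiv : I -> nat -> cfg -> R) : Prop :=
  forall i,
    is_prob (lam i) /\
    (forall k, cylindrical (phiv i k) (V i k) /\
               forall x, Xcfg x -> 0 <= phiv i k x) /\
    (forall x, Xcfg x -> Y x ->
       (fun n => \sum_(k < n) lam i k * phiv i k x) @ \oo --> phi i x).

End Defs.

From HB Require Import structures.
From mathcomp Require Import all_boot all_order all_algebra.
From mathcomp Require Import all_classical all_reals all_analysis.
Set Implicit Arguments. Unset Strict Implicit. Unset Printing Implicit Defensive.
Import Order.TTheory GRing.Theory Num.Theory numFieldNormedType.Exports.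
Local Open Scope classical_set_scope.
Local Open Scope ring_scope.

(* The partial sums telescope:
   sum_(k <= n) Delta_(v_k)(x) = inf {phi(y) : y in Y, y = x on v_n},
   and this infimum lies between phi(x) minus the oscillation of phi on v_n
   and phi(x), so it tends to phi(x).  The weights cancel,
   lam(v) * (Delta_v / lam(v)) = Delta_v, also when lam(v) = 0, because then
   0 <= Delta_v <= sup Delta_v = 0. *)

Section Eqon.
Variables (R : realType) (I : countType).
Implicit Types (v w : set (I * R)) (x y z : cfg R I).

Lemma sub_eqon v w x y : v `<=` w -> eqon w x y -> eqon v x y.
Proof. by move=> vw e i t /vw; apply: e. Qed.

Lemma eqon_sym v x y : eqon v x y -> eqon v y x.
Proof. by move=> e i t vt; rewrite (e i t vt). Qed.

Lemma eqon_trans v x y z : eqon v x y -> eqon v y z -> eqon v x z.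
Proof. by move=> exy eyz i t vt; rewrite (exy i t vt) (eyz i t vt). Qed.

End Eqon.

Section InfY.
Variables (R : realType) (I : countType) (Y : set (cfg R I)) (f : cfg R I -> R).
Hypothesis f_ge0 : forall y, Y y -> 0 <= f y.
Implicit Types (v w : set (I * R)) (x : cfg R I).

Lemma infY_ge0 v x : (0 <= infY Y f v x)%E.
Proof. by apply: le_ereal_inf_tmp => _ [y [Yy _] <-]; rewrite lee_fin f_ge0. Qed.

Lemma infY_le v x : Y x -> (infY Y f v x <= (f x)%:E)%E.
Proof. by move=> Yx; apply: ereal_inf_lbound; exists x. Qed.

Lemma infY_fin_num v x : Y x -> infY Y f v x \is a fin_num.
Proof.
move=> Yx; rewrite ge0_fin_numE; last exact: infY_ge0.
exact: le_lt_trans (infY_le v Yx) (ltry _).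
Qed.

Lemma le_infY v w x : v `<=` w -> (infY Y f v x <= infY Y f w x)%E.
Proof.
move=> vw; apply: le_ereal_inf_tmp => _ [y [Yy e] <-].
by apply: ereal_inf_lbound; exists y => //; split => //; apply: sub_eqon e.
Qed.

Lemma infY_eqon v x x' : eqon v x x' -> infY Y f v x = infY Y f v x'.
Proof.
move=> e; rewrite /infY; congr ereal_inf.
apply/seteqP; split => _ [y [Yy e'] <-]; exists y => //; split => //.
  exact: eqon_trans e' e.
exact: eqon_trans e' (eqon_sym e).
Qed.

Lemma dist_infY_le v x (e : R) : Y x ->
  (forall y, Y y -> eqon v y x -> `|f y - f x| <= e) ->
  `|f x - fine (infY Y f v x)| <= e.
Proof.
move=> Yx osc_e; have fin := infY_fin_num v Yx.
have up : fine (infY Y f v x) <= f x by rewrite -lee_fin fineK // infY_le.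
have lo : f x - e <= fine (infY Y f v x).
  rewrite -lee_fin fineK //; apply: le_ereal_inf_tmp => _ [y [Yy eyx] <-].
  rewrite lee_fin lerBlDl -lerBlDr; apply: le_trans (osc_e y Yy eyx).
  by rewrite distrC ler_norm.
by rewrite ger0_norm ?subr_ge0 // lerBlDr -lerBlDl.
Qed.

Variable V : nat -> set (I * R).
Hypothesis V_incr : forall k, V k `<=` V k.+1.

Lemma Delta_ge0 k x : 0 <= fine (Delta Y f V k x).
Proof.
case: k => [|k] /=; first exact/fine_ge0/infY_ge0.
have := infY_ge0 (V k) x; have := le_infY x (@V_incr k).
case: (infY Y f (V k.+1) x) => [a| |]; case: (infY Y f (V k) x) => [b| |] //=.
by rewrite !lee_fin subr_ge0.
Qed.

Lemma Delta_eqon k x x' : eqon (V k) x x' -> Delta Y f V k x = Delta Y f V k x'.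
Proof.
move=> e; case: k e => [|k] e /=; first exact: infY_eqon.
by rewrite (infY_eqon e) (infY_eqon (sub_eqon (@V_incr k) e)).
Qed.

Lemma sum_Delta x n : Y x ->
  \sum_(k < n.+1) fine (Delta Y f V k x) = fine (infY Y f (V n) x).
Proof.
move=> Yx; elim: n => [|n IH]; first by rewrite big_ord1.
by rewrite big_ord_recr IH /= fineB ?infY_fin_num // addrC subrK.
Qed.

End InfY.

Lemma mulr_divr_id (R : fieldType) (a b : R) : (a = 0 -> b = 0) -> a * (b / a) = b.
Proof.
have [-> /(_ erefl) ->|a0 _] := eqVneq a 0; first by rewrite mul0r.
by rewrite mulrCA divff ?mulr1.
Qed.

Section Oscillation.
Variables (R : realType) (I : countType) (Y : set (cfg R I)).
Variables (phi : I -> cfg R I -> R) (V : I -> nat -> set (I * R)).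

Lemma oscillation_ub i k x y : Y x -> Y y -> eqon (V i k) x y ->
  ((`|phi i x - phi i y|)%:E <= oscillation Y phi V k)%E.
Proof.
move=> Yx Yy e; apply: le_trans; last by apply: ereal_sup_ubound; exists i.
by apply: ereal_sup_ubound; exists (x, y).
Qed.

Lemma infY_cvg i x : (forall y, Y y -> 0 <= phi i y) -> Y x ->
  oscillation Y phi V @ \oo --> 0%E ->
  fine (infY Y (phi i) (V i n) x) @[n --> \oo] --> phi i x.
Proof.
move=> phi_ge0 Yx osc0; apply/cvgrPdist_le => e e_gt0.
have osc_lt : \forall n \near \oo, (oscillation Y phi V n < e%:E)%E.
  by apply: (osc0 _ (open_ereal_lt' _)); rewrite lte_fin.
near=> n; have osc_n : (oscillation Y phi V n < e%:E)%E by near: n.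
apply: dist_infY_le => // y Yy eyx; rewrite -lee_fin.
exact/ltW/(le_lt_trans (oscillation_ub Yy Yx eyx)).
Unshelve. all: by end_near.
Qed.

End Oscillation.

Theorem mainTheorem3 (R : realType) (I : countType)
  (phi : I -> cfg R I -> R) (V : I -> nat -> set (I * R))
  (Y : set (cfg R I)) (lam : I -> nat -> R) :
  (forall i x, @Xcfg R I x -> 0 <= phi i x) ->
  (forall i k, finite_nbhd (V i k)) ->
  (forall i, coherent (phi i) (V i)) ->
  (forall i k, V i k `<=` V i k.+1) ->
  Y `<=` @Xcfg R I ->
  oscillation Y phi V @ \oo --> 0%E ->
  (forall i, is_prob (lam i)) ->
  (forall i k, lam i k = 0 ->
     ereal_sup [set Delta Y (phi i) (V i) k x | x in @Xcfg R I `&` Y] = 0%E) ->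
  Kalikow_decomposition Y phi V lam
    (fun i k x => fine (Delta Y (phi i) (V i) k x) / lam i k).
Proof.
move=> phi_ge0 _ _ V_incr YX osc0 lam_prob lam0 i.
have phiY_ge0 y : Y y -> 0 <= phi i y by move/YX; apply: phi_ge0.
have [lam_ge0 _] := lam_prob i.
split=> //; split=> [k|x Xx Yx].
  split=> [x x' _ _ e|x _]; last by rewrite divr_ge0 ?(Delta_ge0 phiY_ge0 (V_incr i)).
  by rewrite (Delta_eqon _ _ (V_incr i) e).
have weight_cancel k : lam i k * (fine (Delta Y (phi i) (V i) k x) / lam i k)
    = fine (Delta Y (phi i) (V i) k x).
  apply: mulr_divr_id => /lam0 sup0; apply/le_anti.
  rewrite (Delta_ge0 phiY_ge0 (V_incr i)) andbT; apply: fine_le0.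
  by rewrite -sup0; apply: ereal_sup_ubound; exists x.
have partial_sumE : (fun n => \sum_(k < n.+1) lam i k *
      (fine (Delta Y (phi i) (V i) k x) / lam i k))
    = (fun n => fine (infY Y (phi i) (V i n) x)).
  by apply/funext => n; under eq_bigr do rewrite weight_cancel; exact: sum_Delta.
rewrite -cvg_shiftS /= partial_sumE; exact: infY_cvg.
Qed.
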